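(* For every intersection lattice $L$, there exists a tight intersection lattice $L'$ that is isomorphic (as a poset) to $L$.
   Context: A finite family $\mathcal{F}$ of sets is non-trivial if it is non-empty and no $X\in\mathcal{F}$ satisfies $X=\bigcup\mathcal{F}$. For such $\mathcal{F}$ and non-empty $\mathcal{T}\subseteq\mathcal{F}$, let $S_{\mathcal{T}}=\bigcap\mathcal{T}$, and let $S_\emptyset=\bigcup\mathcal{F}$. The intersection lattice of $\mathcal{F}$ is the poset $\mathbb{L}_{\mathcal{F}}=(\{S_{\mathcal{T}}\mid \mathcal{T}\subseteq\mathcal{F}\},\subseteq)$; its greatest element is $\hat 1=\bigcup\mathcal{F}$. A lattice is an intersection lattice if it equals $\mathbb{L}_{\mathcal{F}}$ for some non-trivial finite family $\mathcal{F}$. For $L=\mathbb{L}_{\mathcal{F}}$ and $x\in\hat 1$, let $\min_L(x)=S_{\{X\in\mathcal{F}\mid x\in X\}}$. The intersection lattice $L$ is tight if for every $U\in L$ with $U\neq\hat 1$ there is exactly one $x\in\hat 1$ with $\min_L(x)=U$. *)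

From mathcomp Require Import all_boot.
From mathcomp Require Import boolp classical_sets.
Set Implicit Arguments. Unset Strict Implicit. Unset Printing Implicit Defensive.
Local Open Scope classical_set_scope.

Section IntersectionLattice.
Variables (T : Type) (n : nat).

(* A finite family of sets over T, indexed by 'I_n (repetitions allowed). *)
Definition fam_union (F : 'I_n -> set T) : set T := \bigcup_i F i.

Definition nontrivial_fam (F : 'I_n -> set T) : Prop :=
  (0 < n)%N /\ forall i, F i <> fam_union F.

Definition S_sub (F : 'I_n -> set T) (I : {set 'I_n}) : set T :=
  if I == finset.set0 then fam_union F else [set x | forall i, i \in I -> F i x].

Definition int_lattice (F : 'I_n -> set T) : set (set T) := range (S_sub F).

Definition minL (F : 'I_n -> set T) (x : T) : set T :=
  S_sub F (finset.finset (fun i => `[< F i x >])).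

Definition tight (F : 'I_n -> set T) : Prop :=
  forall U, int_lattice F U -> U <> fam_union F ->
    exists! x, fam_union F x /\ minL F x = U.

End IntersectionLattice.

Definition poset_iso (T T' : Type) (L : set (set T)) (L' : set (set T')) : Prop :=
  exists f : set T -> set T',
    (forall U, L U -> L' (f U)) /\
    (forall V, L' V -> exists2 U, L U & f U = V) /\
    (forall U V, L U -> L V -> (U `<=` V <-> f U `<=` f V)).

From mathcomp Require Import all_boot.
From mathcomp Require Import boolp classical_sets.
Set Implicit Arguments. Unset Strict Implicit. Unset Printing Implicit Defensive.
Local Open Scope classical_set_scope.

(* Send each U of L to the set of proper elements of L contained in U, and
   take as new family the images of the members of F. Taking images commutes
   with intersections, so the new lattice is the image of L. The map is an
   order embedding: a proper U is the largest proper element below itself, and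
   the top is the union of the members of F, which are proper. Finally, in the
   new lattice a proper element V of L, seen as a point, has as minimal set
   exactly the image of V; by injectivity it is the only such point. *)

Section ProperBelow.
Variables (T : Type) (n : nat) (F : 'I_n -> set T).

Local Notation top := (fam_union F).
Local Notation L := (int_lattice F).

Lemma S_sub_set0 (A : Type) (G : 'I_n -> set A) :
  S_sub G finset.set0 = fam_union G.
Proof. by rewrite /S_sub eqxx. Qed.

Lemma S_subE (A : Type) (G : 'I_n -> set A) (I : {set 'I_n}) :
  I != finset.set0 -> S_sub G I = [set x | forall i, i \in I -> G i x].
Proof. by move=> /negbTE I0; rewrite /S_sub I0. Qed.

Lemma int_lattice_top : L top.
Proof. by exists finset.set0; rewrite ?S_sub_set0. Qed.

Lemma int_lattice_fam i : L (F i).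
Proof.
have i_in : i \in finset.set1 i by rewrite finset.in_set1.
exists (finset.set1 i) => //; rewrite S_subE; last by apply/finset.set0Pn; exists i.
apply/seteqP; split => [x|x Fx j]; first exact.
by rewrite finset.in_set1 => /eqP ->.
Qed.

Lemma int_lattice_sub_top U : L U -> U `<=` top.
Proof.
case=> I _ <-; have [->|/[dup] I0 /finset.set0Pn [i iI]] := eqVneq I finset.set0.
  by rewrite S_sub_set0.
by rewrite S_subE // => x /(_ i iI) Fix; exists i.
Qed.

Lemma int_lattice_proper V : L V -> V <> top ->
  exists2 I : {set 'I_n}, I != finset.set0 &
    V = [set x | forall i, i \in I -> F i x].
Proof.
case=> I _ <- Vtop; have [I0|I0] := eqVneq I finset.set0.
  by rewrite I0 S_sub_set0 in Vtop.
by exists I; rewrite ?S_subE.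
Qed.

Definition proper_below (U : set T) : set (set T) :=
  [set V | L V /\ V <> top /\ V `<=` U].

Definition proper_below_fam (i : 'I_n) : set (set T) := proper_below (F i).

Lemma fam_union_proper_below_fam : fam_union proper_below_fam = proper_below top.
Proof.
apply/seteqP; split=> V.
  case=> i _ [LV [Vtop VF]]; split=> //; split=> //.
  by apply: subset_trans VF _ => x Fx; exists i.
case=> LV [Vtop _]; have [I /finset.set0Pn [i iI] EV] := int_lattice_proper LV Vtop.
by exists i => //; split=> //; split=> //; rewrite EV => x /(_ i iI).
Qed.

Lemma S_sub_proper_below_fam J : S_sub proper_below_fam J = proper_below (S_sub F J).
Proof.
have [->|/[dup] J0 /finset.set0Pn [j jJ]] := eqVneq J finset.set0.
  by rewrite !S_sub_set0 fam_union_proper_below_fam.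
rewrite !S_subE //; apply/seteqP; split=> V /=.
  move=> belowV; have [LV [Vtop _]] := belowV j jJ; split=> //; split=> //.
  by move=> x Vx i iJ; have [_ [_ VF]] := belowV i iJ; exact: VF.
by move=> [LV [Vtop VS]] i iJ; split=> //; split=> // x /VS /(_ i iJ).
Qed.

Lemma int_lattice_proper_below_famP V :
  int_lattice proper_below_fam V <-> exists2 U, L U & proper_below U = V.
Proof.
split=> [[J _ <-]|[U [I _ <-] <-]].
  by exists (S_sub F J); [exists J | rewrite S_sub_proper_below_fam].
by exists I; rewrite ?S_sub_proper_below_fam.
Qed.

Lemma minL_proper_below_fam V : L V -> V <> top ->
  minL proper_below_fam V = proper_below V.
Proof.
move=> LV Vtop; rewrite /minL S_sub_proper_below_fam; congr proper_below.
have [I /[dup] I0 /finset.set0Pn [i iI] EV] := int_lattice_proper LV Vtop.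
have VF j : j \in I -> V `<=` F j by move=> jI x; rewrite EV => /(_ j jI).
have belowV j : j \in I -> j \in finset.finset (fun k => `[< proper_below_fam k V >]).
  by move=> jI; rewrite finset.in_set; apply/asboolP; split=> //; split=> //; exact: VF.
rewrite S_subE; last by apply/finset.set0Pn; exists i; exact: belowV.
apply/seteqP; split=> x /=.
  by move=> xV; rewrite EV => j /belowV; exact: xV.
by move=> Vx j; rewrite finset.in_set => /asboolP [_ [_ /(_ x Vx)]].
Qed.

Hypothesis F_proper : forall i, F i <> top.

Lemma proper_below_subset U W : L U -> L W ->
  (U `<=` W <-> proper_below U `<=` proper_below W).
Proof.
move=> LU LW; split=> [UW V [LV [Vtop VU]]|belowUW].
  by split=> //; split=> //; exact: subset_trans UW.
have [Utop|Utop] := pselect (U = top); last first.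
  by have [_ [_]] := belowUW U (conj LU (conj Utop (@subset_refl _ U))).
rewrite Utop => x [i _ Fix].
have Fi_below : proper_below U (F i).
  split; [exact: int_lattice_fam | split; first exact: F_proper].
  by rewrite Utop; exact/int_lattice_sub_top/int_lattice_fam.
by have [_ [_ /(_ x Fix)]] := belowUW _ Fi_below.
Qed.

Lemma proper_below_inj U W : L U -> L W -> proper_below U = proper_below W -> U = W.
Proof.
move=> LU LW eqUW; apply/seteqP; split.
  by apply/(proper_below_subset LU LW); rewrite eqUW.
by apply/(proper_below_subset LW LU); rewrite eqUW.
Qed.

Lemma nontrivial_proper_below_fam : (0 < n)%N -> nontrivial_fam proper_below_fam.
Proof.
move=> n_gt0; split=> // i; rewrite fam_union_proper_below_fam => eq_below.
exact: F_proper i (proper_below_inj (int_lattice_fam i) int_lattice_top eq_below).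
Qed.

Lemma tight_proper_below_fam : tight proper_below_fam.
Proof.
move=> _ /int_lattice_proper_below_famP [W LW <-].
rewrite fam_union_proper_below_fam => Wtop.
have {}Wtop : W <> top by move=> eqWtop; apply: Wtop; rewrite eqWtop.
exists W; split.
  by split; [split=> //; split=> //; exact: int_lattice_sub_top | exact: minL_proper_below_fam].
move=> V [[LV [Vtop _]]]; rewrite minL_proper_below_fam //.
by move/(proper_below_inj LV LW).
Qed.

Lemma poset_iso_proper_below_fam : poset_iso L (int_lattice proper_below_fam).
Proof.
exists proper_below; split; [|split].
- by move=> U LU; apply/int_lattice_proper_below_famP; exists U.
- by move=> V /int_lattice_proper_below_famP.
- exact: proper_below_subset.
Qed.

End ProperBelow.

Theorem lemma4p3 (T : Type) (n : nat) (F : 'I_n -> set T) :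
  nontrivial_fam F ->
  exists (T' : Type) (n' : nat) (F' : 'I_n' -> set T'),
    nontrivial_fam F' /\ tight F' /\ poset_iso (int_lattice F) (int_lattice F').
Proof.
move=> [n_gt0 F_proper]; exists (set T), n, (proper_below_fam F).
split; first exact: nontrivial_proper_below_fam.
split; first exact: tight_proper_below_fam.
exact: poset_iso_proper_below_fam.
Qed.
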